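(* Let $k\ge1$ be fixed and consider the asymptotic regime $n\to\infty$. For $1\le i,j\le n$ let $\mathsf d_{i,j,\mathrm{noisy}}\ge0$ and $\mathsf d_{i,j,\mathrm{clean}}\ge0$ be scalar dissimilarities (possibly random), and suppose there exist $\xi_n\in\mathbb R$ with $$\sup_{i\ne j}\big|\mathsf d^2_{i,j,\mathrm{noisy}}-\mathsf d^2_{i,j,\mathrm{clean}}-\xi_n\big|=o_P(1).$$ For a fixed $\nu>0$ set $\tilde w_{i,j}=\exp(-\mathsf d^2_{i,j,\mathrm{noisy}}/\nu)$, $w_{i,j}=\exp(-\mathsf d^2_{i,j,\mathrm{clean}}/\nu)$, $W=(w_{i,j})$, $\widetilde W=(\tilde w_{i,j})$. Let $G,\widetilde G$ be $nk\times nk$ block matrices with $k\times k$ blocks $G_{i,j},\widetilde G_{i,j}$ (connections between clean, resp. noisy, versions of objects $i$ and $j$). Suppose that there is a constant $C>0$ with $\sup_{i,j}\|G_{i,j}\|_F\le C$, $\sup_{i,j}\|\widetilde G_{i,j}\|_F\le C$, that $\sup_{i,j}\|\widetilde G_{i,j}-G_{i,j}\|_F=o_P(1)$, and that $\inf_i\frac1n\sum_{j\ne i}w_{i,j}>\gamma$ with $\gamma$ bounded below by a positive constant as $n\to\infty$. Then $$\|L(W,G)-L_0(\widetilde W,\widetilde G)\|_{op}=o_P(1).$$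
   Context: For an $n\times n$ matrix $W$ and an $nk\times nk$ block matrix $G$, $S$ is the block matrix with blocks $w_{i,j}G_{i,j}$, $D$ is block diagonal with blocks $(\sum_{j\ne i}w_{i,j})\mathrm I_k$, $L(W,G)=D^{-1}S$, and $L_0(W,G)=L(W\circ1_{i\ne j},G)$, i.e. computed after setting the diagonal weights to $0$. $o_P(1)$ denotes convergence to $0$ in probability as $n\to\infty$. *)

From HB Require Import structures.
From mathcomp Require Import all_boot all_order all_algebra.
From mathcomp Require Import all_classical all_reals all_analysis.
Set Implicit Arguments. Unset Strict Implicit. Unset Printing Implicit Defensive.
Import Order.TTheory GRing.Theory Num.Theory.
Local Open Scope classical_set_scope.
Local Open Scope ring_scope.

Section Defs.
Variable R : realType.

Definition frob (k : nat) (A : 'M[R]_k) : R :=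
  Num.sqrt (\sum_(a < k) \sum_(b < k) (A a b) ^+ 2).

Definition vnorm (m : nat) (x : 'cV[R]_m) : R :=
  Num.sqrt (\sum_(a < m) (x a 0) ^+ 2).

Definition opnorm (m p : nat) (A : 'M[R]_(m, p)) : R :=
  sup [set vnorm (A *m x) | x in [set x : 'cV[R]_p | vnorm x <= 1]].

Definition Smx (n k : nat) (W : 'M[R]_n) (G : 'I_n -> 'I_n -> 'M[R]_k)
  : 'M[R]_(\sum_(i < n) k) :=
  \mxblock_(i < n, j < n) (W i j *: G i j).

Definition Dmx (n k : nat) (W : 'M[R]_n) : 'M[R]_(\sum_(i < n) k) :=
  \mxdiag_(i < n) ((\sum_(j < n | j != i) W i j) *: (1%:M : 'M[R]_k)).

Definition Lmx (n k : nat) (W : 'M[R]_n) (G : 'I_n -> 'I_n -> 'M[R]_k)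
  : 'M[R]_(\sum_(i < n) k) :=
  invmx (Dmx k W) *m Smx W G.

Definition offdiag (n : nat) (W : 'M[R]_n) : 'M[R]_n :=
  \matrix_(i < n, j < n) (if i == j then 0 else W i j).

Definition L0mx (n k : nat) (W : 'M[R]_n) (G : 'I_n -> 'I_n -> 'M[R]_k)
  : 'M[R]_(\sum_(i < n) k) :=
  Lmx (offdiag W) G.

(* X_n = o_P(1): convergence to 0 in (outer) probability *)
Definition oP1 (d : measure_display) (T : measurableType d)
  (P : probability T R) (X : nat -> T -> R) : Prop :=
  forall eps : R, 0 < eps -> forall delta : R, 0 < delta ->
    exists N : nat, forall n : nat, (N <= n)%N ->
      exists A : set T, measurable A /\
        [set w | eps < `|X n w|] `<=` A /\ (P A <= delta%:E)%E.

Definition sup_offdiag (n : nat) (f : 'I_n -> 'I_n -> R) : R :=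
  \big[Num.max/0]_(i < n) \big[Num.max/0]_(j < n | j != i) `|f i j|.

Definition sup_all (n : nat) (f : 'I_n -> 'I_n -> R) : R :=
  \big[Num.max/0]_(i < n) \big[Num.max/0]_(j < n) `|f i j|.

End Defs.

(* Write d_i for the off-diagonal row sums of W. Both L(W,G) and L_0(Wt,Gt) are block
   matrices with blocks (w_ij / d_i) G_ij, the diagonal weights being dropped in L_0.
   On the event where the squared distances are uniformly within nu ln lam of a common
   shift xi_n, every off-diagonal noisy weight equals exp(-xi_n/nu) times the clean one
   up to a factor in [1/lam, lam]; so do the row sums, and the common factor cancels:
   the normalised weights differ by at most (lam^2 - 1) times the clean ones.  Since
   d_i > gamma n, every normalised weight is at most 1/(gamma n), hence each
   off-diagonal block of the difference has Frobenius norm O((eta + C (lam^2 - 1))/n)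
   and each diagonal block O(C/n).  Summing the n^2 squared block norms bounds the
   Frobenius norm of the difference, and with it the operator norm, by
   O(eta + C (lam^2 - 1) + C / sqrt n), independently of k. *)

From HB Require Import structures.
From mathcomp Require Import all_boot all_order all_algebra.
From mathcomp Require Import all_classical all_reals all_analysis.
From mathcomp Require Import ring lra.
Set Implicit Arguments. Unset Strict Implicit. Unset Printing Implicit Defensive.
Import Order.TTheory GRing.Theory Num.Theory.
Local Open Scope classical_set_scope.
Local Open Scope ring_scope.

Lemma sum_mul_sqr_le (R : realDomainType) (I : finType) (a x : I -> R) :
  (\sum_i a i * x i) ^+ 2 <= (\sum_i a i ^+ 2) * (\sum_i x i ^+ 2).
Proof.
have lagrange : 2 * ((\sum_i a i ^+ 2) * (\sum_i x i ^+ 2) - (\sum_i a i * x i) ^+ 2)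
    = \sum_i \sum_j (a i * x j - a j * x i) ^+ 2.
  have expand i : \sum_j (a i * x j - a j * x i) ^+ 2 =
      a i ^+ 2 * \sum_j x j ^+ 2 + x i ^+ 2 * \sum_j a j ^+ 2
      - 2 * (a i * x i) * \sum_j a j * x j.
    rewrite !mulr_sumr -!big_split -sumrB /=.
    by apply: eq_bigr => j _; ring.
  rewrite (eq_bigr _ (fun i _ => expand i)) sumrB big_split /=.
  rewrite -!mulr_suml -mulr_sumr expr2; ring.
have : 0 <= \sum_i \sum_j (a i * x j - a j * x i) ^+ 2.
  by apply: sumr_ge0 => i _; apply: sumr_ge0 => j _; apply: sqr_ge0.
rewrite -lagrange; lra.
Qed.

Section Norms.
Variable R : realType.

Lemma frob_ge0 (k : nat) (A : 'M[R]_k) : 0 <= frob A.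
Proof. exact: sqrtr_ge0. Qed.

Lemma vnorm_mulmx_le (m : nat) (A : 'M[R]_m) (x : 'cV[R]_m) :
  vnorm (A *m x) <= frob A * vnorm x.
Proof.
rewrite /vnorm /frob -sqrtrM; last by do 2!(apply: sumr_ge0 => * ); apply: sqr_ge0.
rewrite ler_sqrt; last by apply: mulr_ge0; do ?(apply: sumr_ge0 => * ); apply: sqr_ge0.
rewrite mulr_suml; apply: ler_sum => p _; rewrite mxE.
exact: sum_mul_sqr_le.
Qed.

Lemma opnorm_bounds (m : nat) (A : 'M[R]_m) : 0 <= opnorm A <= frob A.
Proof.
set E := [set vnorm (A *m x) | x in [set x : 'cV[R]_m | vnorm x <= 1]].
have vnorm0 : vnorm (0 : 'cV[R]_m) = 0.
  by rewrite /vnorm big1 ?sqrtr0 // => i _; rewrite mxE expr0n.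
have E0 : E 0 by exists 0; rewrite /= ?vnorm0 ?ler01 // mulmx0 vnorm0.
have frob_ub : ubound E (frob A).
  move=> _ [x /= x_le1 <-]; apply: (le_trans (vnorm_mulmx_le A x)).
  by rewrite -[leRHS]mulr1 ler_wpM2l // frob_ge0.
apply/andP; split; first exact: ub_le_sup (ex_intro _ _ frob_ub) _ E0.
by apply: ge_sup => //; exists 0.
Qed.

End Norms.

Section Frobenius.
Variables (R : realType) (k : nat).
Implicit Types (A B : 'M[R]_k).

Lemma frob_sqr A : frob A ^+ 2 = \sum_a \sum_b A a b ^+ 2.
Proof. by rewrite sqr_sqrtr //; do 2!(apply: sumr_ge0 => * ); apply: sqr_ge0. Qed.

Lemma frobZ (c : R) A : frob (c *: A) = `|c| * frob A.
Proof.
rewrite /frob -sqrtr_sqr -sqrtrM ?sqr_ge0 // mulr_sumr; congr Num.sqrt.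
by apply: eq_bigr => a _; rewrite mulr_sumr; apply: eq_bigr => b _; rewrite mxE exprMn.
Qed.

Lemma frobN A : frob (- A) = frob A.
Proof. by rewrite -scaleN1r frobZ normrN1 mul1r. Qed.

Lemma frob_dot_le A B : \sum_a \sum_b A a b * B a b <= frob A * frob B.
Proof.
set d := \sum_a \sum_b A a b * B a b.
have cs : d ^+ 2 <= (frob A * frob B) ^+ 2.
  rewrite exprMn !frob_sqr /d !pair_bigA /=.
  exact: (sum_mul_sqr_le (fun p : 'I_k * 'I_k => A p.1 p.2) (fun p => B p.1 p.2)).
apply: le_trans (ler_norm d) _.
by rewrite -(ler_pXn2r (n := 2)) ?nnegrE ?mulr_ge0 ?frob_ge0 // real_normK ?num_real.
Qed.

Lemma frobD_le A B : frob (A + B) <= frob A + frob B.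
Proof.
have fAB_ge0 : 0 <= frob A + frob B by rewrite addr_ge0 ?frob_ge0.
rewrite -(ler_pXn2r (n := 2)) ?nnegrE ?frob_ge0 // sqrrD !frob_sqr.
have -> : \sum_a \sum_b (A + B) a b ^+ 2
    = \sum_a \sum_b A a b ^+ 2 + (\sum_a \sum_b A a b * B a b) *+ 2
      + \sum_a \sum_b B a b ^+ 2.
  rewrite -sumrMnl -!big_split /=; apply: eq_bigr => a _.
  rewrite -sumrMnl -!big_split /=; apply: eq_bigr => b _.
  by rewrite mxE sqrrD.
by rewrite lerD2r lerD2l lerMn2r /= frob_dot_le.
Qed.

End Frobenius.

Section BlockMatrices.
Variables (R : realType) (n k : nat).

Lemma sum_ordsum (F : 'I_n -> 'I_k -> R) :
  \sum_(p : 'I_(\sum_(i < n) k)) F (tagnat.sig1 p) (tagnat.sig2 p)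
  = \sum_i \sum_a F i a.
Proof.
rewrite (reindex (@tagnat.rank n (fun _ => k))) /=; last exact: tagnat.rank_bij_on.
rewrite (sig_big_dep (fun _ => true) (fun _ _ => true) F) /=.
by apply: eq_bigr => t _; rewrite /tagnat.sig1 /tagnat.sig2 tagnat.rankK.
Qed.

Lemma frob_mxblock_sqr (B : 'I_n -> 'I_n -> 'M[R]_k) :
  frob (\mxblock_(i < n, j < n) B i j) ^+ 2 = \sum_i \sum_j frob (B i j) ^+ 2.
Proof.
rewrite [LHS]frob_sqr.
rewrite (eq_bigr (fun p => \sum_j \sum_b B (tagnat.sig1 p) j (tagnat.sig2 p) b ^+ 2)).
  rewrite (sum_ordsum (fun i a => \sum_j \sum_b B i j a b ^+ 2)).
  apply: eq_bigr => i _; rewrite exchange_big; apply: eq_bigr => j _.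
  by rewrite frob_sqr.
move=> p _; rewrite -(sum_ordsum (fun j b => B _ j (tagnat.sig2 p) b ^+ 2)).
by apply: eq_bigr => q _; rewrite mxE.
Qed.

End BlockMatrices.

Section Laplacian.
Variables (R : realType) (n k : nat).
Implicit Types (W : 'M[R]_n) (G : 'I_n -> 'I_n -> 'M[R]_k).

Definition deg W i := \sum_(j < n | j != i) W i j.

Lemma deg_offdiag W i : deg (offdiag W) i = deg W i.
Proof. by apply: eq_bigr => j ji; rewrite mxE eq_sym (negbTE ji). Qed.

Lemma Dmx_unit W : (forall i, deg W i != 0) -> Dmx k W \in unitmx.
Proof.
move=> deg_neq0.
have -> : Dmx k W = diag_mx (\mxrow_i (const_mx (deg W i) : 'rV_k)).
  rewrite diag_mxrow; apply: eq_mxdiag => i.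
  by rewrite diag_const_mx scalemx1.
rewrite unitmxE det_diag unitfE; apply/prodf_neq0 => s _.
by rewrite !mxE.
Qed.

Lemma Lmx_mxblock W G : (forall i, deg W i != 0) ->
  Lmx W G = \mxblock_(i, j) ((W i j / deg W i) *: G i j).
Proof.
move=> deg_neq0; rewrite /Lmx.
have -> : Smx W G = Dmx k W *m \mxblock_(i, j) ((W i j / deg W i) *: G i j).
  rewrite /Smx /Dmx mul_mxdiag_mxblock; apply: eq_mxblock => i j.
  by rewrite -scalemxAl mul1mx scalerA -/(deg W i) mulrC divfK.
by rewrite mulKmx // Dmx_unit.
Qed.

End Laplacian.

Lemma div_le_sqr_mul (R : realFieldType) (a b c e s lam : R) :
  0 < c -> 0 < e -> 0 <= a -> 0 <= lam ->
  b <= lam * s * a -> s * c <= lam * e -> b / e <= lam ^+ 2 * (a / c).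
Proof.
move=> c_gt0 e_gt0 a_ge0 lam_ge0 b_le sc_le.
rewrite ler_pdivrMr // (_ : _ * e = lam ^+ 2 * a * e / c); last by ring.
rewrite ler_pdivlMr //.
have : (lam * a) * (s * c) <= (lam * a) * (lam * e) by rewrite ler_wpM2l ?mulr_ge0.
have : b * c <= lam * s * a * c by rewrite ler_wpM2r // ltW.
nra.
Qed.

Lemma dist_le_ratio (R : realFieldType) (u v L : R) :
  0 <= u -> 1 <= L -> v <= L * u -> u <= L * v -> `|u - v| <= (L - 1) * u.
Proof. by move=> *; rewrite ler_norml; apply/andP; split; nra. Qed.

Section Perturbation.
Variables (R : realType) (n k : nat) (W Wt : 'M[R]_n).
Variables (G Gt : 'I_n -> 'I_n -> 'M[R]_k) (gam C s lam eta : R).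
Hypotheses (gam_gt0 : 0 < gam) (s_gt0 : 0 < s) (lam_ge1 : 1 <= lam).
Hypotheses (W_ge0 : forall i j, 0 <= W i j) (W_le1 : forall i j, W i j <= 1).
Hypothesis W_Wt_le : forall i j, i != j -> s * W i j <= lam * Wt i j.
Hypothesis Wt_W_le : forall i j, i != j -> Wt i j <= lam * s * W i j.
Hypothesis deg_gt : forall i, gam * n%:R < deg W i.
Hypotheses (G_le : forall i j, frob (G i j) <= C) (Gt_le : forall i j, frob (Gt i j) <= C).
Hypothesis GtG_le : forall i j, frob (Gt i j - G i j) <= eta.

Let lam_gt0 : 0 < lam. Proof. exact: lt_le_trans ltr01 lam_ge1. Qed.

Lemma deg_W_gt0 i : 0 < deg W i.
Proof.
by apply: le_lt_trans (deg_gt i); rewrite mulr_ge0 ?ler0n ?ltW.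
Qed.

Lemma deg_W_le i : s * deg W i <= lam * deg Wt i.
Proof. by rewrite !mulr_sumr; apply: ler_sum => j ji; rewrite W_Wt_le // eq_sym. Qed.

Lemma deg_Wt_le i : deg Wt i <= lam * s * deg W i.
Proof. by rewrite mulr_sumr; apply: ler_sum => j ji; rewrite Wt_W_le // eq_sym. Qed.

Lemma deg_Wt_gt0 i : 0 < deg Wt i.
Proof.
have := deg_W_le i; have := deg_W_gt0 i => c_gt0 le_lamdeg.
have : 0 < lam * deg Wt i by apply: lt_le_trans le_lamdeg; rewrite mulr_gt0.
by rewrite pmulr_rgt0.
Qed.

Lemma normalized_weight_le i j : W i j / deg W i <= (gam * n%:R)^-1.
Proof.
have c_gt0 := deg_W_gt0 i.
have gn_gt0 : 0 < gam * n%:R by rewrite mulr_gt0 // ltr0n (leq_ltn_trans _ (ltn_ord i)).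
apply: (@le_trans _ _ (deg W i)^-1).
  by rewrite -[leRHS]mul1r ler_wpM2r ?W_le1 // invr_ge0 ltW.
by rewrite lef_pV2 ?posrE // ltW.
Qed.

Lemma normalized_weight_dist i j : i != j ->
  `|W i j / deg W i - Wt i j / deg Wt i| <= (lam ^+ 2 - 1) * (W i j / deg W i).
Proof.
move=> ij; have [c_gt0 e_gt0] := (deg_W_gt0 i, deg_Wt_gt0 i).
apply: dist_le_ratio.
- by rewrite divr_ge0 // ltW.
- by rewrite expr_ge1 // ltW.
- apply: div_le_sqr_mul (Wt_W_le ij) (deg_W_le i) => //; exact: ltW.
(* the same bound with W and Wt exchanged, the common factor s becoming s^-1 *)
- apply: (@div_le_sqr_mul _ _ _ _ _ s^-1) => //; last 3 first.
  + exact: ltW.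
  + by rewrite mulrAC ler_pdivlMr // mulrC W_Wt_le.
  + by rewrite mulrC ler_pdivrMr // mulrAC deg_Wt_le.
  rewrite -(pmulr_rge0 _ lam_gt0); apply: le_trans (W_Wt_le ij).
  by rewrite mulr_ge0 // ltW.
Qed.

Let block i j := (W i j / deg W i) *: G i j - (offdiag Wt i j / deg Wt i) *: Gt i j.

Lemma L_sub_L0_mxblock : Lmx W G - L0mx Wt Gt = \mxblock_(i, j) block i j.
Proof.
have deg_neq0 i : deg W i != 0 by rewrite gt_eqF ?deg_W_gt0.
have deg_Wt_neq0 i : deg (offdiag Wt) i != 0 by rewrite deg_offdiag gt_eqF ?deg_Wt_gt0.
rewrite /L0mx !Lmx_mxblock // -mxblockB; apply: eq_mxblock => i j.
by rewrite /block deg_offdiag.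
Qed.

Lemma frob_block_diag_le i : frob (block i i) <= C / (gam * n%:R).
Proof.
have u_ge0 : 0 <= W i i / deg W i by rewrite divr_ge0 // ltW // deg_W_gt0.
rewrite /block mxE eqxx mul0r scale0r subr0 frobZ ger0_norm // [C / _]mulrC.
by apply: ler_pM => //; [exact: frob_ge0 | exact: normalized_weight_le].
Qed.

Lemma frob_block_offdiag_le i j : i != j ->
  frob (block i j) <= (eta + C * (lam ^+ 2 - 1)) / (gam * n%:R).
Proof.
move=> ij; set u := W i j / deg W i; set v := Wt i j / deg Wt i.
have u_ge0 : 0 <= u by rewrite divr_ge0 // ltW // deg_W_gt0.
have eta_ge0 : 0 <= eta := le_trans (frob_ge0 _) (GtG_le i j).
have C_ge0 : 0 <= C := le_trans (frob_ge0 _) (G_le i j).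
have lam2_ge0 : 0 <= lam ^+ 2 - 1 by rewrite subr_ge0 expr_ge1 // ltW.
have -> : block i j = u *: (G i j - Gt i j) + (u - v) *: Gt i j.
  by rewrite /block mxE (negbTE ij) scalerBr scalerBl addrA subrK.
apply: le_trans (frobD_le _ _) _; rewrite !frobZ -opprB frobN ger0_norm //.
apply: (@le_trans _ _ (u * (eta + C * (lam ^+ 2 - 1)))).
  rewrite mulrDr lerD ?ler_wpM2l //.
  rewrite mulrCA mulrC; apply: ler_pM; rewrite ?normr_ge0 ?frob_ge0 //.
  by rewrite mulrC normalized_weight_dist.
by rewrite mulrC ler_wpM2l ?addr_ge0 ?mulr_ge0 ?normalized_weight_le.
Qed.

Lemma frob_L_sub_L0_sqr : frob (Lmx W G - L0mx Wt Gt) ^+ 2 <=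
  ((eta + C * (lam ^+ 2 - 1)) / gam) ^+ 2 + (C / gam) ^+ 2 / n%:R.
Proof.
set X := eta + C * (lam ^+ 2 - 1); set Q := (X / gam) ^+ 2 + (C / gam) ^+ 2 / n%:R.
have Q_ge0 : 0 <= Q by rewrite addr_ge0 ?sqr_ge0 ?divr_ge0 ?sqr_ge0.
have row_le i : \sum_j frob (block i j) ^+ 2 <= Q / n%:R.
  have n_gt0 : (0 < n)%N := leq_ltn_trans (leq0n _) (ltn_ord i).
  have sqr_le x y : 0 <= x -> x <= y -> x ^+ 2 <= y ^+ 2.
    by move=> x_ge0 xy; rewrite ler_pXn2r ?nnegrE // (le_trans x_ge0).
  rewrite (bigD1 i) //= (_ : Q / n%:R = (C / (gam * n%:R)) ^+ 2 + n%:R * (X / (gam * n%:R)) ^+ 2).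
    rewrite lerD ?sqr_le ?frob_ge0 ?frob_block_diag_le //.
    rewrite mulr_natl -[X in _ *+ X]card_ord -sumr_const big_mkcond /=.
    apply: ler_sum => j _; case: ifP => ji.
      by rewrite sqr_le ?frob_ge0 ?frob_block_offdiag_le // eq_sym.
    exact: sqr_ge0.
  by rewrite /Q; field; rewrite pnatr_eq0 -lt0n n_gt0 gt_eqF.
rewrite L_sub_L0_mxblock frob_mxblock_sqr.
apply: le_trans (ler_sum _ (fun i _ => row_le i)) _.
rewrite sumr_const card_ord -[_ *+ n]mulr_natr.
have [->|n_gt0] := posnP n; first by rewrite mulr0.
by rewrite divfK // pnatr_eq0 -lt0n.
Qed.

End Perturbation.

Lemma opnorm_L_sub_L0_le (R : realType) (k : nat) (gam C eps : R) :
  0 < gam -> 0 < C -> 0 < eps ->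
  exists2 lam : R, 1 < lam & exists2 eta : R, 0 < eta & exists N, forall n, (N <= n)%N ->
  forall (W Wt : 'M[R]_n) (G Gt : 'I_n -> 'I_n -> 'M[R]_k) (s : R), 0 < s ->
  (forall i j, 0 <= W i j <= 1) ->
  (forall i j, i != j -> s * W i j <= lam * Wt i j /\ Wt i j <= lam * s * W i j) ->
  (forall i, gam * n%:R < deg W i) ->
  (forall i j, frob (G i j) <= C /\ frob (Gt i j) <= C) ->
  (forall i j, frob (Gt i j - G i j) <= eta) ->
  opnorm (Lmx W G - L0mx Wt Gt) <= eps.
Proof.
move=> gam_gt0 C_gt0 eps_gt0.
(* lam ^+ 2 - 1 = tau and eta = gam * eps / 4 make the first term of
   frob_L_sub_L0_sqr equal to (eps / 2) ^+ 2; n > b bounds the second by eps ^+ 2 / 2. *)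
pose tau := gam * eps / (4 * C).
have tau_gt0 : 0 < tau by rewrite divr_gt0 ?mulr_gt0.
have lam2 : Num.sqrt (1 + tau) ^+ 2 = 1 + tau by rewrite sqr_sqrtr // addr_ge0 // ltW.
have lam_gt1 : 1 < Num.sqrt (1 + tau).
  by rewrite -[X in X < _]sqrtr1 ltr_sqrt ?ltrDl // ltr_wpDr // ltW.
exists (Num.sqrt (1 + tau)) => //.
exists (gam * eps / 4); first by rewrite divr_gt0 ?mulr_gt0.
pose b := 2 * (C / (gam * eps)) ^+ 2.
have b_ge0 : 0 <= b by rewrite mulr_ge0 ?sqr_ge0.
exists (Num.Def.archi_bound b) => n nN W Wt G Gt s s_gt0 W01 ratio deg_gt GC GtG.
have b_lt_n : b < n%:R by apply: lt_le_trans (archi_boundP b_ge0) _; rewrite ler_nat.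
have n_gt0 : 0 < n%:R :> R := le_lt_trans b_ge0 b_lt_n.
have := frob_L_sub_L0_sqr gam_gt0 s_gt0 (ltW lam_gt1)
  (fun i j => proj1 (andP (W01 i j))) (fun i j => proj2 (andP (W01 i j)))
  (fun i j ij => proj1 (ratio i j ij)) (fun i j ij => proj2 (ratio i j ij)) deg_gt
  (fun i j => proj1 (GC i j)) (fun i j => proj2 (GC i j)) GtG.
have -> : (gam * eps / 4 + C * (Num.sqrt (1 + tau) ^+ 2 - 1)) / gam = eps / 2.
  by rewrite lam2 /tau; field; rewrite !gt_eqF.
have tail_le : (C / gam) ^+ 2 / n%:R <= eps ^+ 2 / 2.
  rewrite ler_pdivrMr // -ler_pdivrMl ?mulr_gt0 //.
  apply: le_trans (ltW b_lt_n); rewrite /b le_eqVlt; apply/orP; left; apply/eqP.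
  by field; rewrite !gt_eqF.
move=> frob_sqr_le; apply: le_trans (proj2 (andP (opnorm_bounds _))) _.
rewrite -(ler_pXn2r (n := 2)) ?nnegrE ?frob_ge0 //; last exact: ltW.
apply: le_trans frob_sqr_le _; nra.
Qed.

Section Sup.
Variables (R : realType) (n : nat) (f : 'I_n -> 'I_n -> R).

Lemma le_sup_offdiag i j : i != j -> `|f i j| <= sup_offdiag f.
Proof.
move=> ij; apply: le_trans (le_bigmax _ _ i).
by apply: (le_bigmax_cond _ (fun j => `|f i j|)); rewrite eq_sym.
Qed.

Lemma le_sup_all i j : `|f i j| <= sup_all f.
Proof. exact: le_trans (le_bigmax _ _ j) (le_bigmax _ _ i). Qed.

End Sup.

Lemma expR_ratio_le (R : realType) (nu lam xi x y : R) : 0 < nu -> 0 < lam ->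
  `|x - y - xi| <= nu * ln lam ->
  expR (- xi / nu) * expR (- y / nu) <= lam * expR (- x / nu) /\
  expR (- x / nu) <= lam * expR (- xi / nu) * expR (- y / nu).
Proof.
move=> nu_gt0 lam_gt0 dist_le.
have : `|x / nu - y / nu - xi / nu| <= ln lam.
  by rewrite -!mulrBl normrM normfV (gtr0_norm nu_gt0) ler_pdivrMr // mulrC.
rewrite ler_norml => /andP[? ?].
by rewrite -[lam]lnK ?posrE // -!expRD !ler_expR !mulNr; split; lra.
Qed.

Section ConvergenceInProbability.
Variables (R : realType) (d : measure_display) (T : measurableType d).
Variable P : probability T R.

Lemma oP1_of_control (X Y Z : nat -> T -> R) : oP1 P X -> oP1 P Y ->
  (forall eps, 0 < eps -> exists2 ex, 0 < ex & exists2 ey, 0 < ey &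
     exists N, forall n, (N <= n)%N -> forall w,
       `|X n w| <= ex -> `|Y n w| <= ey -> `|Z n w| <= eps) ->
  oP1 P Z.
Proof.
move=> oX oY ctrl eps eps_gt0 delta delta_gt0.
have [ex ex_gt0 [ey ey_gt0 [N ZN]]] := ctrl eps eps_gt0.
have delta2_gt0 : 0 < delta / 2 by rewrite divr_gt0.
have [NX HX] := oX ex ex_gt0 _ delta2_gt0; have [NY HY] := oY ey ey_gt0 _ delta2_gt0.
exists (maxn N (maxn NX NY)) => n; rewrite !geq_max => /and3P[nN nNX nNY].
have [A [mA [XA PA]]] := HX n nNX; have [B [mB [YB PB]]] := HY n nNY.
exists (A `|` B); split; first exact: measurableU.
split.
  move=> w /=; rewrite ltNge => /negP Zw; apply: contrapT => /not_orP[Aw Bw].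
  by apply/Zw/ZN => //; rewrite leNgt; apply/negP => ?; [apply: Aw; apply: XA | apply: Bw; apply: YB].
apply: le_trans (measureU2 P mA mB) _; apply: le_trans (leeD PA PB) _.
by rewrite -EFinD -splitr.
Qed.

End ConvergenceInProbability.

Theorem proposition2p4
  (R : realType) (d : measure_display) (T : measurableType d)
  (P : probability T R) (k : nat) (nu : R)
  (dnoisy dclean : forall n : nat, T -> 'I_n -> 'I_n -> R)
  (xi : nat -> R)
  (G Gt : forall n : nat, T -> 'I_n -> 'I_n -> 'M[R]_k) :
  (0 < k)%N ->
  0 < nu ->
  (forall n w i j, 0 <= dnoisy n w i j) ->
  (forall n w i j, 0 <= dclean n w i j) ->
  oP1 P (fun n w => sup_offdiag
           (fun i j => dnoisy n w i j ^+ 2 - dclean n w i j ^+ 2 - xi n)) ->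
  (exists C : R, 0 < C /\ exists N : nat, forall n, (N <= n)%N ->
     forall w i j, frob (G n w i j) <= C /\ frob (Gt n w i j) <= C) ->
  oP1 P (fun n w => sup_all (fun i j => frob (Gt n w i j - G n w i j))) ->
  (exists gamma : R, 0 < gamma /\ exists N : nat, forall n, (N <= n)%N ->
     forall w (i : 'I_n),
       gamma < n%:R^-1 * \sum_(j < n | j != i) expR (- dclean n w i j ^+ 2 / nu)) ->
  oP1 P (fun n w =>
    opnorm
      (Lmx (\matrix_(i < n, j < n) expR (- dclean n w i j ^+ 2 / nu)) (G n w)
       - L0mx (\matrix_(i < n, j < n) expR (- dnoisy n w i j ^+ 2 / nu)) (Gt n w))).
Proof.
move=> _ nu_gt0 _ _ dist_oP [C [C_gt0 [NC GC]]] G_oP [gam [gam_gt0 [Ng deg_gt]]].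
apply: (oP1_of_control dist_oP G_oP) => eps eps_gt0.
have [lam lam_gt1 [eta eta_gt0 [N small]]] := opnorm_L_sub_L0_le k gam_gt0 C_gt0 eps_gt0.
have lam_gt0 : 0 < lam := lt_trans ltr01 lam_gt1.
exists (nu * ln lam); first by rewrite mulr_gt0 ?ln_gt0.
exists eta => //; exists (maxn N (maxn NC Ng)) => n.
rewrite !geq_max => /and3P[nN nNC nNg] w dist_le G_le.
rewrite ger0_norm ?(proj1 (andP (opnorm_bounds _))) //.
apply: (small n nN _ _ _ _ (expR (- xi n / nu))) => [|i j|i j ij|i|i j|i j].
- exact: expR_gt0.
- by rewrite mxE expR_ge0 expR_le1 mulNr oppr_le0 divr_ge0 ?sqr_ge0 // ltW.
- rewrite !mxE; apply: expR_ratio_le => //.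
  apply: le_trans dist_le; apply: le_trans (ler_norm _).
  exact: (le_sup_offdiag (fun i j => dnoisy n w i j ^+ 2 - _ - _) ij).
- have n_gt0 : 0 < n%:R :> R by rewrite ltr0n (leq_ltn_trans _ (ltn_ord i)).
  rewrite /deg; under eq_bigr do rewrite mxE.
  by rewrite -ltr_pdivlMr // mulrC deg_gt.
- exact: GC.
- apply: le_trans G_le; apply: le_trans (ler_norm _); apply: le_trans (ler_norm _) _.
  exact: (le_sup_all (fun i j => frob (Gt n w i j - G n w i j))).
Qed.
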